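(* Let $h:\{x_1,\dots,x_n\}^*\to\{a_1,\dots,a_k\}^*$ be a solution of rank $n-1$ of both equations $E$ and $E'$, and let $\alpha\in\mathbb N^k$. Then $\mathcal S_E(L(\vartheta_\alpha\circ h))$ and $\mathcal S_{E'}(L(\vartheta_\alpha\circ h))$ are linearly dependent over $\mathbb Q(x)$.
   Context: An equation is a pair $(u,v)$ of words over $\{x_1,\dots,x_n\}$; a solution is a morphism $h$ with $h(u)=h(v)$. For $h:\{x_1,\dots,x_n\}^*\to\{a_1,\dots,a_k\}^*$, $\gamma(h)_i=(|h(x_1)|_{a_i},\dots,|h(x_n)|_{a_i})$ and the rank of $h$ is the dimension of the $\mathbb Q$-span of the $\gamma(h)_i$. $L(h)=(|h(x_1)|,\dots,|h(x_n)|)$. $\mathbb N$ is the positive integers; for $\alpha\in\mathbb N^k$, $\vartheta_\alpha$ is the endomorphism of $\{a_1,\dots,a_k\}^*$ given by $a_i\mapsto a_i^{(\alpha)_i}$. For $E=(x_{i_1}\cdots x_{i_r},\,x_{j_1}\cdots x_{j_s})$, $S_{E,x_j}=\sum_{a:\,i_a=j}\prod_{t=1}^{a-1}X_{i_t}-\sum_{a:\,j_a=j}\prod_{t=1}^{a-1}X_{j_t}$ (empty product $=1$); for $\beta\in\mathbb N_0^n$, $\mathcal S_E(\beta)=(S_{E,x_1}(\beta),\dots,S_{E,x_n}(\beta))\in\mathbb Z[x]^n$ where $p(\beta)$ is the image of $p$ under $X_i\mapsto x^{(\beta)_i}$. *)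

From HB Require Import structures.
From mathcomp Require Import all_boot all_order all_algebra.
Set Implicit Arguments. Unset Strict Implicit. Unset Printing Implicit Defensive.
Import Order.TTheory GRing.Theory Num.Theory.
Local Open Scope ring_scope.

(* Variables x_1..x_n are 'I_n, letters a_1..a_k are 'I_k; words are seqs. *)
Definition word (T : Type) := seq T.

Definition equation (n : nat) := (seq 'I_n * seq 'I_n)%type.

Definition morph_app (A B : Type) (h : A -> seq B) (w : seq A) : seq B :=
  flatten (map h w).

Definition is_solution (n k : nat) (h : 'I_n -> seq 'I_k) (E : equation n) :=
  morph_app h E.1 = morph_app h E.2.

(* gamma(h) as a k x n rational matrix: row i is gamma(h)_i. *)
Definition gamma_mx (n k : nat) (h : 'I_n -> seq 'I_k) : 'M[rat]_(k, n) :=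
  \matrix_(i < k, j < n) (count_mem i (h j))%:R.

Definition rank_morph (n k : nat) (h : 'I_n -> seq 'I_k) : nat :=
  \rank (gamma_mx h).

Definition Lvec (n k : nat) (h : 'I_n -> seq 'I_k) : 'I_n -> nat :=
  fun j => size (h j).

Definition theta (k : nat) (alpha : 'I_k -> nat) : 'I_k -> seq 'I_k :=
  fun a => nseq (alpha a) a.

Definition comp_morph (n k : nat) (g : 'I_k -> seq 'I_k) (h : 'I_n -> seq 'I_k)
  : 'I_n -> seq 'I_k := fun j => morph_app g (h j).

(* sum over positions a (0-based) with w_a = j of prod_{t<a} x^{beta_{w_t}} *)
Definition S_side (n : nat) (w : seq 'I_n) (j : 'I_n) (beta : 'I_n -> nat)
  : {poly int} :=
  \sum_(a < size w | tnth (in_tuple w) a == j)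
     \prod_(t < a) 'X^(beta (tnth (in_tuple w) (widen_ord (ltnW (ltn_ord a)) t))).

Definition S_E (n : nat) (E : equation n) (j : 'I_n) (beta : 'I_n -> nat)
  : {poly int} := S_side E.1 j beta - S_side E.2 j beta.

Notation Qx := {fraction {poly rat}}.

Definition to_Qx (p : {poly int}) : Qx := tofrac (map_poly intr p).

Definition calS (n : nat) (E : equation n) (beta : 'I_n -> nat) : 'rV[Qx]_n :=
  \row_(j < n) to_Qx (S_E E j beta).

Definition lin_dep2 (F : fieldType) (m : nat) (u v : 'rV[F]_m) : Prop :=
  exists c d : F, (c != 0 \/ d != 0) /\ c *: u + d *: v = 0.

(* Let [occ_poly w i] be the polynomial with coefficient 1 at each position
   of the letter [a_i] in the word [w].  It turns concatenation into a shifted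
   sum, so the occurrence polynomials of [g(w)] are the combination of those
   of the images [g(x_j)] with coefficients [S_side w j (L g)].  Hence for a
   solution [g] of [E] the vector [S_E(L g)] lies in the left kernel of the
   matrix [(occ_poly (g x_j) a_i)] over [Q(x)].  At [x = 1] this matrix is
   [gamma(g)^T], and specialization can only lower the rank, so its rank is
   at least [rank gamma(g) >= rank gamma(h) = n - 1] (the rows of
   [gamma(theta_alpha o h)] are those of [gamma(h)] scaled by [alpha_i > 0]).
   A left kernel of dimension at most one holds no two independent vectors. *)

From mathcomp Require Import all_boot all_order all_algebra zify.
Import Order.TTheory GRing.Theory Num.Theory.
Local Open Scope ring_scope.

Lemma lin_dep2_mulmx0 (F : fieldType) m p (M : 'M[F]_(m, p)) (u v : 'rV_m) :
  (m.-1 <= \rank M)%N -> u *m M = 0 -> v *m M = 0 -> lin_dep2 u v.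
Proof.
move=> rankM uM vM.
have W_ker : (col_mx u v <= kermx M)%MS.
  by apply/sub_kermxP; rewrite mul_col_mx uM vM col_mx0.
have W_not_free : ~~ row_free (col_mx u v).
  apply/negP => /eqP rankW; move: (mxrankS W_ker); rewrite rankW mxrank_ker.
  by case: m M rankM {u v uM vM W_ker rankW} => //= m M rankM; lia.
have /rowV0Pn[x /sub_kermxP xW x_neq0] : kermx (col_mx u v) != 0.
  by rewrite kermx_eq0.
exists (lsubmx x 0 0), (rsubmx x 0 0); split.
  have [l0|] := eqVneq (lsubmx x 0 0) 0; last by left.
  right; apply: contraNneq x_neq0 => r0.
  rewrite -[x]hsubmxK (mx11_scalar (lsubmx x)) (mx11_scalar (rsubmx x)).
  by rewrite l0 r0 !raddf0 row_mx0 eqxx.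
by rewrite -!mul_scalar_mx -!mx11_scalar -mul_row_col hsubmxK.
Qed.

Lemma mxrank_mxsub (F : fieldType) m n p q (f : 'I_p -> 'I_m) (g : 'I_q -> 'I_n)
    (A : 'M[F]_(m, n)) :
  (\rank (mxsub f g A) <= \rank A)%N.
Proof.
have -> : mxsub f g A = rowsub f (colsub g A) by apply/matrixP => i j; rewrite !mxE.
apply: leq_trans (mxrankS (rowsub_sub _ _)) _.
have -> : colsub g A = (rowsub g A^T)^T by apply/matrixP => i j; rewrite !mxE.
by rewrite mxrank_tr -[X in (_ <= X)%N]mxrank_tr mxrankS ?rowsub_sub.
Qed.

Lemma unitmx_maximal_minor (F : fieldType) m n (A : 'M[F]_(m, n)) :
  exists (f : 'I_(\rank A) -> 'I_m) (g : 'I_(\rank A) -> 'I_n),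
    mxsub f g A \in unitmx.
Proof.
pose f := maxrankfun A.
have fullT : row_full (rowsub f A)^T.
  by rewrite /row_full mxrank_tr; apply: maxrowsub_free.
exists f, (fullrankfun fullT).
have -> : mxsub f (fullrankfun fullT) A = (rowsub (fullrankfun fullT) (rowsub f A)^T)^T.
  by apply/matrixP => i j; rewrite !mxE.
by rewrite unitmx_tr -row_free_unit /row_free mxrank_fullrowsub.
Qed.

Lemma mxrank_map_le_tofrac (R : idomainType) (F : fieldType)
    (f : {rmorphism R -> F}) m n (A : 'M[R]_(m, n)) :
  (\rank (map_mx f A) <= \rank (map_mx (@tofrac R) A))%N.
Proof.
have [r [c unit_minor]] := @unitmx_maximal_minor _ _ _ (map_mx f A).
have det_neq0 : \det (mxsub r c A) != 0.
  apply: contraTneq unit_minor => det0.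
  by rewrite -map_mxsub unitmxE det_map_mx det0 rmorph0 unitr0.
have unit_minor_frac : mxsub r c (map_mx (@tofrac R) A) \in unitmx.
  by rewrite -map_mxsub unitmxE det_map_mx unitfE tofrac_eq0.
by rewrite -[X in (X <= _)%N](mxrank_unit unit_minor_frac) mxrank_mxsub.
Qed.

Lemma S_side_nil n (j : 'I_n) beta : S_side [::] j beta = 0.
Proof. by rewrite /S_side big_ord0. Qed.

Lemma S_side_cons n (c : 'I_n) w j beta :
  S_side (c :: w) j beta = (c == j)%:R + 'X^(beta c) * S_side w j beta.
Proof.
have S_side_nat u : S_side u j beta = \sum_(0 <= a < size u)
    (nth j u a == j)%:R * \prod_(0 <= t < a) 'X^(beta (nth j u t)).
  rewrite /S_side big_mkord big_mkcond; apply: eq_bigr => a _.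
  rewrite (tnth_nth j) /= big_mkord.
  under eq_bigr => t _ do rewrite (tnth_nth j) /=.
  by case: (nth j u a == j); rewrite ?mul1r ?mul0r.
rewrite !S_side_nat /= big_nat_recl // big_geq // mulr1 mulr_sumr.
congr (_ + _); apply: eq_bigr => a _.
by rewrite big_nat_recl //= mulrCA.
Qed.

Fixpoint occ_poly {k} (w : seq 'I_k) (i : 'I_k) : {poly int} :=
  if w is c :: w' then (c == i)%:R + 'X * occ_poly w' i else 0.

Lemma occ_poly_cat k (u v : seq 'I_k) i :
  occ_poly (u ++ v) i = occ_poly u i + 'X^(size u) * occ_poly v i.
Proof.
elim: u => [|c u IH] /=; first by rewrite add0r expr0 mul1r.
by rewrite IH mulrDr addrA exprS mulrA.
Qed.

Lemma occ_poly_morph_app n k (g : 'I_n -> seq 'I_k) (w : seq 'I_n) i :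
  occ_poly (morph_app g w) i = \sum_j S_side w j (Lvec g) * occ_poly (g j) i.
Proof.
elim: w => [|c w IH].
  by rewrite big1 // => j _; rewrite S_side_nil mul0r.
rewrite /morph_app /= -/(morph_app g w) occ_poly_cat IH.
under eq_bigr => j _ do rewrite S_side_cons mulrDl -mulrA.
rewrite big_split /= -mulr_sumr; congr (_ + _).
rewrite (bigD1 c) //= eqxx mul1r big1 ?addr0 // => j /negbTE.
by rewrite eq_sym => ->; rewrite mul0r.
Qed.

Lemma occ_poly_at1 k (w : seq 'I_k) i :
  (map_poly intr (occ_poly w i) : {poly rat}).[1] = (count_mem i w)%:R.
Proof.
elim: w => [|c w IH] /=; first by rewrite rmorph0 horner0.
rewrite rmorphD rmorphM /= rmorph_nat map_polyX hornerD hornerM hornerX IH mul1r.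
by rewrite -polyC_natr hornerC natrD.
Qed.

Lemma morph_app_comp n k (th : 'I_k -> seq 'I_k) (h : 'I_n -> seq 'I_k) w :
  morph_app (comp_morph th h) w = morph_app th (morph_app h w).
Proof.
elim: w => [|c w IH] //.
by rewrite /morph_app /= -/(morph_app _ w) IH map_cat flatten_cat.
Qed.

Lemma is_solution_comp n k (th : 'I_k -> seq 'I_k) (h : 'I_n -> seq 'I_k) E :
  is_solution h E -> is_solution (comp_morph th h) E.
Proof. by rewrite /is_solution !morph_app_comp => ->. Qed.

Lemma count_mem_theta k (alpha : 'I_k -> nat) (w : seq 'I_k) i :
  count_mem i (morph_app (theta alpha) w) = (alpha i * count_mem i w)%N.
Proof.
elim: w => [|c w IH] /=; first by rewrite muln0.
rewrite /morph_app /= -/(morph_app _ w) count_cat IH count_nseq /= mulnDr.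
by have [->|/negPf ci] := eqVneq c i; rewrite /= ?eqxx ?ci ?muln1 ?muln0 ?mul1n.
Qed.

Lemma rank_morph_theta_comp n k (h : 'I_n -> seq 'I_k) (alpha : 'I_k -> nat) :
  (forall i, (0 < alpha i)%N) ->
  (rank_morph h <= rank_morph (comp_morph (theta alpha) h))%N.
Proof.
move=> alpha_gt0; rewrite /rank_morph.
have -> : gamma_mx h = diag_mx (\row_i ((alpha i)%:R^-1 : rat))
                         *m gamma_mx (comp_morph (theta alpha) h).
  apply/matrixP => i j; rewrite mul_diag_mx !mxE count_mem_theta natrM mulrA.
  by rewrite mulVf ?mul1r // pnatr_eq0 -lt0n.
exact: mxrankM_maxr.
Qed.

Definition occ_mx {n k} (g : 'I_n -> seq 'I_k) : 'M[Qx]_(n, k) :=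
  \matrix_(j, i) to_Qx (occ_poly (g j) i).

Lemma calS_mul_occ_mx n k (g : 'I_n -> seq 'I_k) E :
  is_solution g E -> calS E (Lvec g) *m occ_mx g = 0.
Proof.
move=> solE; apply/rowP => i; rewrite !mxE.
have /(congr1 to_Qx) : \sum_j S_E E j (Lvec g) * occ_poly (g j) i = 0.
  under eq_bigr => j _ do rewrite mulrBl.
  by rewrite sumrB -!occ_poly_morph_app solE subrr.
rewrite /to_Qx !rmorph_sum !rmorph0; apply: etrans.
by apply: eq_bigr => j _; rewrite !mxE /to_Qx !rmorphM.
Qed.

Lemma rank_morph_le_occ_mx n k (g : 'I_n -> seq 'I_k) :
  (rank_morph g <= \rank (occ_mx g))%N.
Proof.
pose A : 'M[{poly rat}]_(n, k) := \matrix_(j, i) map_poly intr (occ_poly (g j) i).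
have -> : occ_mx g = map_mx (@tofrac _) A by apply/matrixP => j i; rewrite !mxE.
have -> : rank_morph g = \rank (map_mx (horner_eval (1 : rat)) A).
  rewrite /rank_morph -mxrank_tr; congr (\rank _); apply/matrixP => j i.
  by rewrite !mxE /= horner_evalE occ_poly_at1.
exact: mxrank_map_le_tofrac.
Qed.

Theorem lemma3p2 (n k : nat) (h : 'I_n -> seq 'I_k) (E E' : equation n)
  (alpha : 'I_k -> nat) :
  is_solution h E -> is_solution h E' ->
  rank_morph h = n.-1 ->
  (forall i, (0 < alpha i)%N) ->
  lin_dep2 (calS E (Lvec (comp_morph (theta alpha) h)))
           (calS E' (Lvec (comp_morph (theta alpha) h))).
Proof.
move=> solE solE' rank_h alpha_gt0.
set g := comp_morph (theta alpha) h.
apply: (@lin_dep2_mulmx0 _ _ _ (occ_mx g)).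
- rewrite -rank_h.
  exact: leq_trans (@rank_morph_theta_comp _ _ h _ alpha_gt0) (@rank_morph_le_occ_mx _ _ g).
- exact/calS_mul_occ_mx/is_solution_comp.
- exact/calS_mul_occ_mx/is_solution_comp.
Qed.
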